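(* Let $A=\mathbb{C}[x,y,z]$ and let $B$ be $A$, or its quotient field $Q(A)$, or the $M$-adic completion $\widehat A$ of $A$ at a maximal ideal $M$. Let $a,b,c\in B$. Then $c\,\mathrm{grad}(a)$ and $\mathrm{grad}(b)$ are compatible if and only if $\det\mathrm{Jac}(a,b,c)=0$.
   Context: $\mathrm{grad}(a)=(a_x,a_y,a_z)$ (partial derivatives, extended to $Q(A)$ by the quotient rule and to $\widehat A$ by continuity), $\mathrm{Jac}(f,g,h)$ is the matrix with rows $\mathrm{grad}(f),\mathrm{grad}(g),\mathrm{grad}(h)$. $F=(f,g,h)\in B^3$ is a Poisson triple on $B$ if there is a Poisson bracket on $B$ with $\{y,z\}=f$, $\{z,x\}=g$, $\{x,y\}=h$; two Poisson triples $F,G$ are compatible if $\lambda F+\mu G$ is a Poisson triple on $B$ for all $\lambda,\mu\in\mathbb{C}$. *)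

From HB Require Import structures.
From mathcomp Require Import all_boot all_algebra.
From mathcomp Require Import reals.
From mathcomp Require Import complex.
From mathcomp Require Import mpoly.

Set Implicit Arguments.
Unset Strict Implicit.
Unset Printing Implicit Defensive.

Import GRing.Theory.
Local Open Scope ring_scope.

(* A "setting" B: a C-algebra given by its operations, together with the    *)
Record Setting (C : Type) := MkSetting {
  car :> Type;
  addB : car -> car -> car;
  oppB : car -> car;
  mulB : car -> car -> car;
  sclB : C -> car -> car;
  zeroB : car;
  xB : car; yB : car; zB : car;
  dxB : car -> car; dyB : car -> car; dzB : car -> car
}.

Section Poisson.
Variables (C : Type) (B : Setting C).

Local Notation "a +' b" := (addB a b) (at level 50, left associativity).
Local Notation "a *' b" := (mulB a b) (at level 40, left associativity).
Local Notation "l *:' a" := (sclB l a) (at level 40).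

(* Poisson bracket on B: C-bilinear (linearity in the second argument
   follows from skew-symmetry), skew-symmetric, Leibniz rule, Jacobi.       *)
Definition poisson_bracket (br : B -> B -> B) : Prop :=
  [/\ (forall (l m : C) (a b c : B),
          br ((l *:' a) +' (m *:' b)) c = (l *:' br a c) +' (m *:' br b c)),
      (forall a b : B, br a b = oppB (br b a)),
      (forall a b c : B, br a (b *' c) = (br a b *' c) +' (b *' br a c)) &
      (forall a b c : B,
          br a (br b c) +' br b (br c a) +' br c (br a b) = zeroB B)].

Definition triple := (B * B * B)%type.

Definition poisson_triple (F : triple) : Prop :=
  exists br : B -> B -> B, poisson_bracket br /\
    [/\ br (yB B) (zB B) = F.1.1, br (zB B) (xB B) = F.1.2
      & br (xB B) (yB B) = F.2].

Definition lincomb (l m : C) (F G : triple) : triple :=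
  ((l *:' F.1.1) +' (m *:' G.1.1),
   (l *:' F.1.2) +' (m *:' G.1.2),
   (l *:' F.2)   +' (m *:' G.2)).

Definition compatible (F G : triple) : Prop :=
  forall l m : C, poisson_triple (lincomb l m F G).

Definition grad (a : B) : triple := (dxB a, dyB a, dzB a).

Definition scaled_grad (c a : B) : triple :=
  (c *' dxB a, c *' dyB a, c *' dzB a).

Local Notation "a -' b" := (addB a (oppB b)) (at level 50, left associativity).

Definition jacdet (a b c : B) : B :=
  let ax := dxB a in let ay := dyB a in let az := dzB a in
  let bx := dxB b in let by_ := dyB b in let bz := dzB b in
  let cx := dxB c in let cy := dyB c in let cz := dzB c in
  (ax *' ((by_ *' cz) -' (bz *' cy)))
  -' (ay *' ((bx *' cz) -' (bz *' cx)))
  +' (az *' ((bx *' cy) -' (by_ *' cx))).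

End Poisson.

Section Rings.
Variable R : realType.
Local Notation C := (complex R).

Definition polyA := {mpoly C[3]}.

Definition polyS : Setting C :=
  @MkSetting C polyA (@GRing.add _) (@GRing.opp _) (@GRing.mul _)
    (fun l p => l *: p) 0
    'X_0 'X_1 'X_(2 : 'I_3)
    (mderiv 0) (mderiv 1) (mderiv (2 : 'I_3)).

(* Q(A), the quotient field of A; partial derivatives are extended by the
   quotient rule, computed on a representative n/d of the fraction.          *)
Definition fracQ := {fraction polyA}.

Definition frac_deriv (i : 'I_3) (q : fracQ) : fracQ :=
  let n := \n_(repr q) in let d := \d_(repr q) in
  tofrac (mderiv i n * d - n * mderiv i d) / tofrac (d * d).

Definition fracS : Setting C :=
  @MkSetting C fracQ (@GRing.add _) (@GRing.opp _) (@GRing.mul _)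
    (fun l q => tofrac (l%:MP : polyA) * q) 0
    (tofrac 'X_0) (tofrac 'X_1) (tofrac 'X_(2 : 'I_3))
    (frac_deriv 0) (frac_deriv 1) (frac_deriv (2 : 'I_3)).

(* The M-adic completion of A at the maximal ideal
   M = (x - p0, y - p1, z - p2), p in C^3: the ring of formal power series
   C[[X,Y,Z]] in X = x - p0, Y = y - p1, Z = z - p2.  A series is the family
   of its coefficients  f i j k  (coefficient of X^i Y^j Z^k).              *)
Definition pseries := nat -> nat -> nat -> C.

Definition ps_add (f g : pseries) : pseries := fun i j k => f i j k + g i j k.
Definition ps_opp (f : pseries) : pseries := fun i j k => - f i j k.
Definition ps_mul (f g : pseries) : pseries := fun i j k =>
  \sum_(i1 < i.+1) \sum_(j1 < j.+1) \sum_(k1 < k.+1)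
     f i1 j1 k1 * g (i - i1)%N (j - j1)%N (k - k1)%N.
Definition ps_scl (l : C) (f : pseries) : pseries := fun i j k => l * f i j k.
Definition ps_zero : pseries := fun _ _ _ => 0.
(* the image of the coordinate x: p0 + X, etc. *)
Definition ps_x (p0 : C) : pseries := fun i j k =>
  if [&& i == 0%N, j == 0%N & k == 0%N] then p0
  else if [&& i == 1%N, j == 0%N & k == 0%N] then 1 else 0.
Definition ps_y (p1 : C) : pseries := fun i j k =>
  if [&& i == 0%N, j == 0%N & k == 0%N] then p1
  else if [&& i == 0%N, j == 1%N & k == 0%N] then 1 else 0.
Definition ps_z (p2 : C) : pseries := fun i j k =>
  if [&& i == 0%N, j == 0%N & k == 0%N] then p2
  else if [&& i == 0%N, j == 0%N & k == 1%N] then 1 else 0.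
Definition ps_dx (f : pseries) : pseries := fun i j k => (i.+1)%:R * f i.+1 j k.
Definition ps_dy (f : pseries) : pseries := fun i j k => (j.+1)%:R * f i j.+1 k.
Definition ps_dz (f : pseries) : pseries := fun i j k => (k.+1)%:R * f i j k.+1.

Definition complS (p : 'I_3 -> C) : Setting C :=
  @MkSetting C pseries ps_add ps_opp ps_mul ps_scl ps_zero
    (ps_x (p 0)) (ps_y (p 1)) (ps_z (p (2 : 'I_3)))
    ps_dx ps_dy ps_dz.

End Rings.

From HB Require Import structures.
From mathcomp Require Import all_boot all_algebra.
From mathcomp Require Import reals complex mpoly.
From mathcomp Require Import ring zify boolp.
Set Implicit Arguments.
Unset Strict Implicit.
Unset Printing Implicit Defensive.
Import GRing.Theory Num.Theory.
Local Open Scope ring_scope.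

(* A Poisson bracket with {y, z}, {z, x}, {x, y} = F = (f, g, h) is determined
   by F: by the Leibniz rule v |-> {u, v} is a derivation, and in each of the
   three rings a derivation vanishing on C and on x, y, z is zero.  Hence
   {u, v} = F . (grad u x grad v).  This formula is always skew-symmetric and
   Leibniz, and its Jacobiator on (u, v, w) is -(F . curl F) det Jac(u, v, w),
   so F is a Poisson triple iff F . curl F = 0.  For F = l c grad a + m grad b
   one finds F . curl F = l m det Jac(a, b, c). *)

Definition derivation (T : pzRingType) (D : T -> T) :=
  {morph D : a b / a + b} /\ forall a b, D (a * b) = D a * b + a * D b.

Section Derivation.
Variables (T : pzRingType) (D : T -> T).
Hypothesis derD : derivation D.

Lemma derivation0 : D 0 = 0.
Proof. by apply: (addrI (D 0)); rewrite -derD.1 !addr0. Qed.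

Lemma derivation1 : D 1 = 0.
Proof.
have := derD.2 1 1; rewrite !mulr1 mul1r => D1.
by apply: (addrI (D 1)); rewrite addr0 -D1.
Qed.

Lemma derivationN a : D (- a) = - D a.
Proof. by apply: (addrI (D a)); rewrite -derD.1 !subrr derivation0. Qed.

Lemma derivationB a b : D (a - b) = D a - D b.
Proof. by rewrite derD.1 derivationN. Qed.

Lemma derivation_addl_ker u : D u = 0 -> forall w, D (u + w) = D w.
Proof. by move=> Du0 w; rewrite derD.1 Du0 add0r. Qed.

Lemma derivationMn a n : D (a *+ n) = D a *+ n.
Proof. by elim: n => [|n IHn]; rewrite ?mulr0n ?derivation0 // !mulrS derD.1 IHn. Qed.

End Derivation.

Section PoissonTriples.
Variables (C : nzRingType) (T : comNzRingType) (iota : C -> T) (scl : C -> T -> T).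
Variables (x y z : T) (dx dy dz : T -> T).

Hypothesis sclE : forall l a, scl l a = iota l * a.
Hypothesis iota1 : iota 1 = 1.
Hypothesis two_reg : forall a : T, a + a = 0 -> a = 0.
Hypotheses (dx_der : derivation dx) (dy_der : derivation dy) (dz_der : derivation dz).
Hypotheses (dx_iota : forall l, dx (iota l) = 0) (dy_iota : forall l, dy (iota l) = 0)
  (dz_iota : forall l, dz (iota l) = 0).
Hypotheses (dxy_comm : forall a, dy (dx a) = dx (dy a))
  (dxz_comm : forall a, dz (dx a) = dx (dz a))
  (dyz_comm : forall a, dz (dy a) = dy (dz a)).
Hypotheses (dxx : dx x = 1) (dxy : dx y = 0) (dxz : dx z = 0).
Hypotheses (dyx : dy x = 0) (dyy : dy y = 1) (dyz : dy z = 0).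
Hypotheses (dzx : dz x = 0) (dzy : dz y = 0) (dzz : dz z = 1).
Hypothesis derivation_eq0 : forall D, derivation D -> (forall l, D (iota l) = 0) ->
  D x = 0 -> D y = 0 -> D z = 0 -> forall a, D a = 0.

Let S : Setting C := MkSetting +%R -%R *%R scl 0 x y z dx dy dz.

Definition bracket_of (F : T * T * T) (u v : T) : T :=
  let: (f, g, h) := F in
  f * (dy u * dz v - dz u * dy v) + g * (dz u * dx v - dx u * dz v)
  + h * (dx u * dy v - dy u * dx v).

Definition dot_curl (F : T * T * T) : T :=
  let: (f, g, h) := F in
  f * (dy h - dz g) + g * (dz f - dx h) + h * (dx g - dy f).

Ltac der_simpl := rewrite ?(dx_der.1, dy_der.1, dz_der.1, dx_der.2, dy_der.2,
  dz_der.2, derivationB dx_der, derivationB dy_der, derivationB dz_der,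
  derivationN dx_der, derivationN dy_der, derivationN dz_der,
  dxy_comm, dxz_comm, dyz_comm, dx_iota, dy_iota, dz_iota).

Lemma bracket_of_jacobi F u v w :
  bracket_of F u (bracket_of F v w) + bracket_of F v (bracket_of F w u)
  + bracket_of F w (bracket_of F u v) = - dot_curl F * jacdet (B:=S) u v w.
Proof.
by case: F => [[f g] h]; rewrite /bracket_of /dot_curl /jacdet /S /=; der_simpl; ring.
Qed.

Lemma bracket_of_poisson F : dot_curl F = 0 -> poisson_bracket (B:=S) (bracket_of F).
Proof.
move=> curl0; split => /= [l m u v w|u v|u v w|u v w].
- by case: F {curl0} => [[f g] h]; rewrite !sclE /bracket_of; der_simpl; ring.
- by case: F {curl0} => [[f g] h]; rewrite /bracket_of; ring.
- by case: F {curl0} => [[f g] h]; rewrite /bracket_of; der_simpl; ring.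
- by rewrite bracket_of_jacobi curl0 mulNr mul0r oppr0.
Qed.

Lemma bracket_of_coords F :
  [/\ bracket_of F y z = F.1.1, bracket_of F z x = F.1.2 & bracket_of F x y = F.2].
Proof.
case: F => [[f g] h].
by rewrite /bracket_of /= !(dxx, dxy, dxz, dyx, dyy, dyz, dzx, dzy, dzz); split; ring.
Qed.

Section PoissonBracket.
Variable br : T -> T -> T.
Hypothesis br_poisson : poisson_bracket (B:=S) br.

Lemma bracketN u v : br u v = - br v u.
Proof. by case: br_poisson => _ /(_ u v). Qed.

Lemma bracketMr u v w : br u (v * w) = br u v * w + v * br u w.
Proof. by case: br_poisson => _ _ /(_ u v w). Qed.

Lemma bracketDr u v w : br u (v + w) = br u v + br u w.
Proof.
case: br_poisson => /(_ 1 1 v w u) /=; rewrite !sclE iota1 !mul1r => brD _ _ _.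
by rewrite bracketN brD opprD -!bracketN.
Qed.

Lemma bracket_iota u l : br u (iota l) = 0.
Proof.
have br1 : br u 1 = 0.
  have := bracketMr u 1 1; rewrite !mulr1 mul1r => br1D.
  by apply: (addrI (br u 1)); rewrite addr0 -br1D.
have br0 : br 0 u = 0 by rewrite bracketN -(mulr0 0) bracketMr !mulr0 mul0r addr0 oppr0.
rewrite bracketN; case: br_poisson => /(_ l l 1 0 u) /=.
by rewrite !sclE mulr1 mulr0 addr0 => -> _ _ _; rewrite bracketN br1 br0 oppr0 !mulr0 addr0 oppr0.
Qed.

Lemma bracketxx u : br u u = 0.
Proof. by apply: two_reg; rewrite {1}bracketN addNr. Qed.

(* v |-> {u, v} is a derivation, hence determined by its values on x, y, z *)
Lemma bracket_chain u v : br u v = br u x * dx v + br u y * dy v + br u z * dz v.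
Proof.
pose D v := br u v - (br u x * dx v + br u y * dy v + br u z * dz v).
have D_der : derivation D.
  by split=> [v1 v2|v1 v2]; rewrite /D ?bracketDr ?bracketMr; der_simpl; ring.
apply/eqP; rewrite -subr_eq0; apply/eqP; apply: (derivation_eq0 D_der) => [l|||];
  rewrite /D ?bracket_iota ?dx_iota ?dy_iota ?dz_iota
    ?(dxx, dxy, dxz, dyx, dyy, dyz, dzx, dzy, dzz); ring.
Qed.

Let brF := (br y z, br z x, br x y).

Lemma bracketE u v : br u v = bracket_of brF u v.
Proof.
rewrite bracket_chain (bracketN u x) (bracketN u y) (bracketN u z).
rewrite !(bracket_chain _ u) !bracketxx (bracketN y x) (bracketN x z) (bracketN z y).
by rewrite /bracket_of; ring.
Qed.

Lemma poisson_dot_curl : dot_curl brF = 0.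
Proof.
case: br_poisson => _ _ _ /(_ x y z) /=.
rewrite (bracketE x (br y z)) (bracketE y (br z x)) (bracketE z (br x y)).
rewrite /bracket_of /dot_curl /= !(dxx, dxy, dxz, dyx, dyy, dyz, dzx, dzy, dzz) => jac.
by rewrite -oppr0 -jac; ring.
Qed.

End PoissonBracket.

Lemma poisson_tripleP F : poisson_triple (B:=S) F <-> dot_curl F = 0.
Proof.
split=> [[br [br_poisson [Fx Fy Fz]]]|curl0].
  by have := poisson_dot_curl br_poisson; case: F Fx Fy Fz => [[f g] h] /= -> -> ->.
by exists (bracket_of F); split; [exact: bracket_of_poisson|exact: bracket_of_coords].
Qed.

Lemma dot_curl_lincomb l m a b c :
  dot_curl (lincomb l m (scaled_grad (B:=S) c a) (grad (B:=S) b))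
  = iota l * iota m * jacdet (B:=S) a b c.
Proof. by rewrite /dot_curl /jacdet /S /= !sclE; der_simpl; ring. Qed.

Theorem compatible_gradP a b c :
  compatible (B:=S) (scaled_grad (B:=S) c a) (grad (B:=S) b) <-> jacdet (B:=S) a b c = 0.
Proof.
split=> [/(_ 1 1) /poisson_tripleP|jac0 l m]; last first.
  by apply/poisson_tripleP; rewrite dot_curl_lincomb jac0 mulr0.
by rewrite dot_curl_lincomb iota1 !mul1r.
Qed.

End PoissonTriples.

Lemma addrr_eq0 (T : idomainType) (a : T) : 2%:R != 0 :> T -> a + a = 0 -> a = 0.
Proof.
by move=> two_neq0 /eqP; rewrite -mulr2n -mulr_natr mulf_eq0 (negbTE two_neq0) orbF => /eqP.
Qed.

Lemma ord3_ind (P : 'I_3 -> Prop) : P 0 -> P 1 -> P 2 -> forall i, P i.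
Proof.
move=> P0 P1 P2 [[|[|[|//]]] lt_i3]; [move: P0|move: P1|move: P2].
all: by congr P; apply: val_inj.
Qed.

Section MPoly.
Variables (n : nat) (R : nzRingType).
Implicit Types (p q : {mpoly R[n]}).

Lemma mpoly_subring_ind (P : {mpoly R[n]} -> Prop) :
  (forall p q, P p -> P q -> P (p + q)) -> (forall p q, P p -> P q -> P (p * q)) ->
  (forall c, P c%:MP) -> (forall i, P 'X_i) -> forall p, P p.
Proof.
move=> PD PM PC PX; have P1 : P 1 by rewrite -mpolyC1.
elim/mpolyind => [|c m p _ _ Pp]; first by rewrite -mpolyC0.
apply: PD Pp; rewrite -mul_mpolyC; apply: (PM) => //; rewrite mpolyXE_id.
apply: (big_ind P) => [//|p1 p2|i _]; first exact: PM.
by elim: (m i) => [|k IHk]; rewrite ?expr0 // exprS; apply: PM.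
Qed.

Lemma mderivXi (i j : 'I_n) : mderiv i ('X_j : {mpoly R[n]}) = (i == j)%:R.
Proof.
rewrite mderivX mnm1E eq_sym; case: eqP => [->|_]; last by rewrite scale0r.
by rewrite -{1}[U_(j)%MM]add0m addmK mpolyX0 scale1r.
Qed.

Lemma mderivation (i : 'I_n) : derivation (mderiv i : {mpoly R[n]} -> _).
Proof. by split=> p q; rewrite ?mderivD ?mderivM. Qed.

End MPoly.

Arguments mderivation {n R}.

Section PolynomialRing.
Variable R : realType.
Local Notation A := (polyA R).

Lemma polyA_addrr_eq0 (a : A) : a + a = 0 -> a = 0.
Proof. by apply: addrr_eq0; rewrite -mpolyC_nat mpolyC_eq0 pnatr_eq0. Qed.

Lemma derivation_polyA_eq0 (D : A -> A) : derivation D -> (forall c, D c%:MP = 0) ->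
  D 'X_0 = 0 -> D 'X_1 = 0 -> D 'X_2 = 0 -> forall p, D p = 0.
Proof.
move=> [DD DM] DC DX DY DZ; apply: mpoly_subring_ind => //.
- by move=> p q Dp Dq; rewrite DD Dp Dq addr0.
- by move=> p q Dp Dq; rewrite DM Dp Dq mulr0 mul0r addr0.
- exact: ord3_ind.
Qed.

Lemma polyS_compatibleP (a b c : A) :
  compatible (B:=polyS R) (scaled_grad (B:=polyS R) c a) (grad (B:=polyS R) b)
  <-> jacdet (B:=polyS R) a b c = zeroB (polyS R).
Proof.
apply: (@compatible_gradP _ _ (fun l => l%:MP)).
1: by move=> l p; rewrite mul_mpolyC.
1: exact: mpolyC1.
1: exact: polyA_addrr_eq0.
1-3: exact: mderivation.
1-3: by move=> l; rewrite mderivC.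
1-3: by move=> p; rewrite mderiv_comm.
1-9: by rewrite mderivXi.
exact: derivation_polyA_eq0.
Qed.

End PolynomialRing.

Lemma quotient_rule_congr (K : fieldType) (N D N0 D0 N' D' N0' D0' : K) :
  D != 0 -> D0 != 0 -> N * D0 = N0 * D -> N' * D0 + N * D0' = N0' * D + N0 * D' ->
  (N0' * D0 - N0 * D0') / (D0 * D0) = (N' * D - N * D') / (D * D).
Proof.
move=> ne_D ne_D0 cross dcross.
have N0E : N0 = N * D0 / D by rewrite cross mulfK.
have N0'E : N0' = (N' * D0 + N * D0' - N0 * D') / D by rewrite dcross addrK mulfK.
by rewrite N0'E N0E; field; apply/andP.
Qed.

Section QuotientRule.
Variable A : idomainType.
Local Notation F := {fraction A}.
Local Notation "x %:F" := (@tofrac A x).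

Lemma fraction_repr (q : F) : q * (\d_(repr q))%:F = (\n_(repr q))%:F.
Proof.
set r := repr q; rewrite -[q]reprK -/r [(\d_r)%:F]piE [(\n_r)%:F]piE.
rewrite -[_ * _]FracField.pi_mul.
apply/eqmodP => /=; rewrite FracField.equivfE /FracField.mulf.
have ne1 := oner_neq0 A; have ne_d := denom_ratioP r.
by rewrite !(numer_Ratio _ ne1) !(denom_Ratio _ ne1) !mulr1 (numer_Ratio _ ne_d)
  (denom_Ratio _ ne_d) mulrC.
Qed.

Lemma fraction_numden (q : F) : exists n d, d != 0 /\ q = n%:F / d%:F.
Proof.
exists \n_(repr q), \d_(repr q); have ne_d := denom_ratioP (repr q); split => //.
by rewrite -fraction_repr mulfK // tofrac_eq0.
Qed.

Lemma tofrac_div_eq (a b c e : A) :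
  b != 0 -> e != 0 -> a * e = c * b -> a%:F / b%:F = c%:F / e%:F.
Proof.
move=> ne_b ne_e cross; apply/eqP.
by rewrite eqr_div ?tofrac_eq0 // -!tofracM tofrac_eq cross.
Qed.

Lemma derivation_fraction_eq0 (D : F -> F) :
  derivation D -> (forall a, D a%:F = 0) -> forall q, D q = 0.
Proof.
move=> D_der D_A q; have [n [d [ne_d q_nd]]] := fraction_numden q.
have nz_d : d%:F != 0 by rewrite tofrac_eq0.
have : D (q * d%:F) = 0 by rewrite q_nd divfK // D_A.
by rewrite D_der.2 D_A mulr0 addr0 => /eqP; rewrite mulf_eq0 (negbTE nz_d) orbF => /eqP.
Qed.

Definition quotient_deriv (delta : A -> A) (q : F) : F :=
  let n := \n_(repr q) in let d := \d_(repr q) in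
  (delta n * d - n * delta d)%:F / (d * d)%:F.

Variable delta : A -> A.
Hypothesis delta_der : derivation delta.

Lemma quotient_derivE n d : d != 0 ->
  quotient_deriv delta (n%:F / d%:F) = (delta n * d - n * delta d)%:F / (d * d)%:F.
Proof.
move=> ne_d; set q := n%:F / d%:F; rewrite /quotient_deriv.
have ne_d0 := denom_ratioP (repr q); have q_repr := fraction_repr q.
move: \n_(repr q) \d_(repr q) ne_d0 q_repr => n0 d0 ne_d0 q_repr.
have cross : n * d0 = n0 * d.
  by apply/eqP; rewrite -tofrac_eq !tofracM -q_repr /q mulrAC divfK // tofrac_eq0.
have dcross := congr1 delta cross; rewrite !delta_der.2 in dcross.
rewrite !(tofracM, tofracB); apply: quotient_rule_congr; rewrite ?tofrac_eq0 //.
  by rewrite -!tofracM cross.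
by rewrite -!tofracM -!tofracD dcross.
Qed.

Lemma quotient_deriv_tofrac a : quotient_deriv delta a%:F = (delta a)%:F.
Proof.
rewrite -[a%:F]divr1 -tofrac1 quotient_derivE ?oner_neq0 // (derivation1 delta_der).
by rewrite mulr0 subr0 !mulr1 divr1.
Qed.

Lemma quotient_derivD : {morph quotient_deriv delta : p q / p + q}.
Proof.
move=> p q; have [n1 [d1 [ne1 ->]]] := fraction_numden p.
have [n2 [d2 [ne2 ->]]] := fraction_numden q.
have [nz1 nz2] : d1%:F != 0 /\ d2%:F != 0 by rewrite !tofrac_eq0.
rewrite addf_div // -!tofracM -tofracD !quotient_derivE ?mulf_neq0 //.
rewrite addf_div ?tofrac_eq0 ?mulf_neq0 // -!tofracM -tofracD.
by apply: tofrac_div_eq; rewrite ?mulf_neq0 // delta_der.1 !delta_der.2; ring.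
Qed.

Lemma quotient_derivM p q :
  quotient_deriv delta (p * q) = quotient_deriv delta p * q + p * quotient_deriv delta q.
Proof.
have [n1 [d1 [ne1 ->]]] := fraction_numden p.
have [n2 [d2 [ne2 ->]]] := fraction_numden q.
rewrite mulf_div -!tofracM !quotient_derivE ?mulf_neq0 // !mulf_div -!tofracM.
rewrite addf_div ?tofrac_eq0 ?mulf_neq0 // -!tofracM -tofracD.
by apply: tofrac_div_eq; rewrite ?mulf_neq0 // !delta_der.2; ring.
Qed.

Lemma quotient_derivation : derivation (quotient_deriv delta).
Proof. by split; [exact: quotient_derivD | exact: quotient_derivM]. Qed.

End QuotientRule.

Lemma quotient_deriv_comm (A : idomainType) (delta1 delta2 : A -> A) :
  derivation delta1 -> derivation delta2 ->
  (forall a, delta2 (delta1 a) = delta1 (delta2 a)) ->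
  forall q, quotient_deriv delta2 (quotient_deriv delta1 q)
            = quotient_deriv delta1 (quotient_deriv delta2 q).
Proof.
move=> der1 der2 comm12 q; have [n [d [ne_d ->]]] := fraction_numden q.
have ne_dd : d * d != 0 by rewrite mulf_neq0.
rewrite !quotient_derivE //; congr (tofrac _ / tofrac _).
by rewrite !(derivationB der1, derivationB der2, der1.2, der2.2) !comm12; ring.
Qed.

Section FractionField.
Variable R : realType.
Local Notation A := (polyA R).
Local Notation F := (fracQ R).
Local Notation "x %:F" := (@tofrac A x).

Lemma fracQ_addrr_eq0 (q : F) : q + q = 0 -> q = 0.
Proof.
move=> qq0; apply: addrr_eq0 qq0.
by rewrite -(rmorph_nat (@tofrac A)) tofrac_eq0 -mpolyC_nat mpolyC_eq0 pnatr_eq0.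
Qed.

Lemma derivation_fracQ_eq0 (D : F -> F) : derivation D -> (forall c, D (c%:MP)%:F = 0) ->
  D ('X_0)%:F = 0 -> D ('X_1)%:F = 0 -> D ('X_2)%:F = 0 -> forall q, D q = 0.
Proof.
move=> [DD DM] DC DX DY DZ; apply: derivation_fraction_eq0 => //.
apply: mpoly_subring_ind => //.
- by move=> p q Dp Dq; rewrite tofracD DD Dp Dq addr0.
- by move=> p q Dp Dq; rewrite tofracM DM Dp Dq mulr0 mul0r addr0.
- exact: ord3_ind.
Qed.

Lemma fracS_compatibleP (a b c : F) :
  compatible (B:=fracS R) (scaled_grad (B:=fracS R) c a) (grad (B:=fracS R) b)
  <-> jacdet (B:=fracS R) a b c = zeroB (fracS R).
Proof.
have der i : derivation (frac_deriv (R:=R) i) := quotient_derivation (mderivation i).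
have comm i j q : frac_deriv j (frac_deriv i q) = frac_deriv i (frac_deriv j q).
  exact: (quotient_deriv_comm (mderivation i) (mderivation j) (mderiv_comm i j)).
have onA i p : frac_deriv i p%:F = (mderiv i p)%:F.
  exact: (quotient_deriv_tofrac (mderivation i)).
apply: (@compatible_gradP _ _ (fun l => (l%:MP)%:F)).
1,2: by rewrite ?mpolyC1 ?tofrac1.
1: exact: fracQ_addrr_eq0.
1-3: exact: der.
1-3: by move=> l; rewrite onA mderivC tofrac0.
1-3: by move=> q; rewrite comm.
1-9: by rewrite onA mderivXi rmorph_nat.
exact: derivation_fracQ_eq0.
Qed.

End FractionField.

Definition fps (S : Type) := nat -> S.

Section FormalPowerSeries.
Variable S : comNzRingType.
Local Notation T := (fps S).
Implicit Types (f g h : T).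

HB.instance Definition _ := gen_eqMixin T.
HB.instance Definition _ := gen_choiceMixin T.

Definition fps_add f g : T := fun i => f i + g i.
Definition fps_opp f : T := fun i => - f i.
Definition fps_zero : T := fun _ => 0.
Definition fps_C (c : S) : T := fun i => if i == 0%N then c else 0.
Definition fps_mul f g : T := fun i => \sum_(k < i.+1) f k * g (i - k)%N.

Lemma fps_addA : associative fps_add.
Proof. by move=> f g h; apply/funext => i; apply: addrA. Qed.
Lemma fps_addC : commutative fps_add.
Proof. by move=> f g; apply/funext => i; apply: addrC. Qed.
Lemma fps_add0 : left_id fps_zero fps_add.
Proof. by move=> f; apply/funext => i; apply: add0r. Qed.
Lemma fps_addN : left_inverse fps_zero fps_opp fps_add.
Proof. by move=> f; apply/funext => i; apply: addNr. Qed.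

HB.instance Definition _ := GRing.isZmodule.Build T fps_addA fps_addC fps_add0 fps_addN.

(* The coefficients of a product below degree n only depend on the
   truncations at degree n, which turns ring laws into polynomial ones. *)
Definition fps_trunc n f : {poly S} := \poly_(k < n) f k.

Lemma coef_fps_truncM n f g i :
  (i < n)%N -> (fps_trunc n f * fps_trunc n g)`_i = fps_mul f g i.
Proof.
move=> lt_in; rewrite coefM; apply: eq_bigr => k _; rewrite !coef_poly.
have lt_kn : (k < n)%N by apply: leq_ltn_trans lt_in; rewrite -ltnS.
by rewrite lt_kn (leq_ltn_trans (leq_subr _ _) lt_in).
Qed.

Lemma fps_mulC : commutative fps_mul.
Proof. by move=> f g; apply/funext => i; rewrite -!(@coef_fps_truncM i.+1) // mulrC. Qed.

Lemma fps_mulA : associative fps_mul.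
Proof.
have mul3 f g h i : fps_mul (fps_mul f g) h i
    = (fps_trunc i.+1 f * fps_trunc i.+1 g * fps_trunc i.+1 h)`_i.
  rewrite coefM; apply: eq_bigr => k _.
  by rewrite (@coef_fps_truncM i.+1) ?coef_poly ?ltnS ?leq_subr // -ltnS.
by move=> f g h; apply/funext => i; rewrite fps_mulC !mul3 mulrC mulrA.
Qed.

Lemma fps_mul1 : left_id (fps_C 1) fps_mul.
Proof.
move=> f; apply/funext => i; rewrite /fps_mul big_ord_recl mul1r subn0.
by rewrite big1 ?addr0 // => k _; rewrite mul0r.
Qed.

Lemma fps_mulDl : left_distributive fps_mul fps_add.
Proof.
move=> f g h; apply/funext => i.
by rewrite /fps_mul /fps_add -big_split; apply: eq_bigr => k _; rewrite mulrDl.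
Qed.

Lemma fps_one_neq0 : fps_C 1 != fps_zero.
Proof. by apply/eqP => /(congr1 (@^~ 0%N)) /eqP; rewrite oner_eq0. Qed.

HB.instance Definition _ := GRing.Zmodule_isComNzRing.Build T
  fps_mulA fps_mulC fps_mul1 fps_mulDl fps_one_neq0.

Lemma fps1E : 1 = fps_C 1. Proof. by []. Qed.
Lemma fps_coef0 i : (0 : T) i = 0. Proof. by []. Qed.
Lemma fps_coefD f g i : (f + g) i = f i + g i. Proof. by []. Qed.
Lemma fps_coefM f g i : (f * g) i = \sum_(k < i.+1) f k * g (i - k)%N. Proof. by []. Qed.
Lemma fps_coefMn f n i : (f *+ n) i = f i *+ n.
Proof. by elim: n => [|n IHn]; rewrite ?mulr0n // !mulrS fps_coefD IHn. Qed.
Lemma fps_coef_sum I (r : seq I) (P : pred I) (F : I -> T) i :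
  (\sum_(k <- r | P k) F k) i = \sum_(k <- r | P k) F k i.
Proof. by elim/big_rec2: _ => // k y1 y2 _ <-. Qed.

Lemma fps_coefCM c f i : (fps_C c * f) i = c * f i.
Proof.
rewrite fps_coefM big_ord_recl subn0 big1 ?addr0 // => k _.
by rewrite /fps_C mul0r.
Qed.

Definition fpsX : T := fun i => if i == 1%N then 1 else 0.

Lemma fps_coefXM f i : (fpsX * f) i = if i is i'.+1 then f i' else 0.
Proof.
rewrite fps_coefM big_ord_recl mul0r add0r; case: i => [|i]; first by rewrite big_ord0.
rewrite big_ord_recl mul1r subSS subn0 big1 ?addr0 // => k _.
by rewrite /fpsX mul0r.
Qed.

Definition fps_deriv f : T := fun i => f i.+1 *+ i.+1.

Lemma fps_derivation : derivation fps_deriv.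
Proof.
split=> f g; apply/funext => i; first by rewrite /fps_deriv !fps_coefD mulrnDl.
rewrite /fps_deriv fps_coefD; change ((f * g) i.+1) with (fps_mul f g i.+1).
rewrite -(@coef_fps_truncM i.+2) // -coef_deriv.
rewrite derivM coefD !coefM; congr (_ + _); apply: eq_bigr => k _;
  rewrite coef_deriv !coef_poly.
  have lt_ki : (k.+1 < i.+2)%N by rewrite ltnS.
  by rewrite lt_ki ltnS (leq_trans (leq_subr _ _)).
have lt_ki : (k < i.+2)%N by rewrite (leq_trans (ltn_ord k)).
by rewrite lt_ki !ltnS leq_subr.
Qed.

Lemma fps_derivC c : fps_deriv (fps_C c) = 0.
Proof. by apply/funext => i; rewrite /fps_deriv /fps_C mul0rn. Qed.

Definition fps_map (d : S -> S) f : T := fun i => d (f i).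

Lemma fps_map_derivation d : derivation d -> derivation (fps_map d).
Proof.
move=> d_der; split=> f g; apply/funext => i; first by rewrite /fps_map !fps_coefD d_der.1.
rewrite /fps_map fps_coefD !fps_coefM (big_morph d d_der.1 (derivation0 d_der)).
by rewrite -big_split; apply: eq_bigr => k _; rewrite d_der.2.
Qed.

Lemma fps_map_deriv d :
  derivation d -> forall f, fps_map d (fps_deriv f) = fps_deriv (fps_map d f).
Proof. by move=> d_der f; apply/funext => i; rewrite /fps_map /fps_deriv derivationMn. Qed.

Lemma fps_map_comm d1 d2 : (forall a, d1 (d2 a) = d2 (d1 a)) ->
  forall f, fps_map d1 (fps_map d2 f) = fps_map d2 (fps_map d1 f).
Proof. by move=> comm12 f; apply/funext => i; rewrite /fps_map comm12. Qed.

Lemma fps_C0 : fps_C 0 = 0.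
Proof. by apply/funext => -[]. Qed.

Lemma fps_derivX : fps_deriv fpsX = 1.
Proof. by apply/funext => -[|[|i]] //=; rewrite /fps_deriv /fpsX /= mul0rn. Qed.

Lemma fps_map_C d : derivation d -> forall c, fps_map d (fps_C c) = fps_C (d c).
Proof.
by move=> d_der c; apply/funext => -[|i] //=; rewrite /fps_map /fps_C /= (derivation0 d_der).
Qed.

Lemma fps_mapX d : derivation d -> fps_map d fpsX = 0.
Proof.
move=> d_der; apply/funext => i; rewrite /fps_map /fpsX.
by case: (i == 1%N); rewrite ?(derivation1 d_der) ?(derivation0 d_der).
Qed.

End FormalPowerSeries.

Section PowerSeries3.
Variable R : realType.
Local Notation C := (complex R).
Local Notation T := (fps (fps (fps C))).

Definition fps3_C (l : C) : T := fps_C (fps_C (fps_C l)).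
Definition fps3_X : T := fpsX _.
Definition fps3_Y : T := fps_C (fpsX _).
Definition fps3_Z : T := fps_C (fps_C (fpsX _)).

Lemma ps_mulE : ps_mul (R:=R) = *%R :> (T -> T -> T).
Proof.
apply/funext => f; apply/funext => g; apply/funext => i; apply/funext => j; apply/funext => k.
rewrite fps_coefM !fps_coef_sum; apply: eq_bigr => i1 _.
by rewrite fps_coefM fps_coef_sum; apply: eq_bigr => j1 _; rewrite fps_coefM.
Qed.

Lemma ps_sclE l (f : T) : ps_scl l f = fps3_C l * f.
Proof. by apply/funext => i; apply/funext => j; apply/funext => k; rewrite !fps_coefCM. Qed.

Lemma ps_dxE : ps_dx (R:=R) = @fps_deriv _ :> (T -> T).
Proof.
apply/funext => f; apply/funext => i; apply/funext => j; apply/funext => k.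
by rewrite /ps_dx /fps_deriv !fps_coefMn mulr_natl.
Qed.

Lemma ps_dyE : ps_dy (R:=R) = fps_map (@fps_deriv _) :> (T -> T).
Proof.
apply/funext => f; apply/funext => i; apply/funext => j; apply/funext => k.
by rewrite /ps_dy /fps_map /fps_deriv fps_coefMn mulr_natl.
Qed.

Lemma ps_dzE : ps_dz (R:=R) = fps_map (fps_map (@fps_deriv _)) :> (T -> T).
Proof.
apply/funext => f; apply/funext => i; apply/funext => j; apply/funext => k.
by rewrite /ps_dz /fps_map /fps_deriv mulr_natl.
Qed.

Lemma ps_xE p0 : ps_x p0 = fps3_C p0 + fps3_X.
Proof.
apply/funext => -[|[|i]]; apply/funext => -[|j]; apply/funext => -[|k];
  by rewrite /ps_x /fps3_C /fps3_X /fpsX /= !fps_coefD ?fps1E ?fps_coef0 /fps_C /=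
       ?fps_coef0 ?addr0 ?add0r.
Qed.

Lemma ps_yE p1 : ps_y p1 = fps3_C p1 + fps3_Y.
Proof.
apply/funext => -[|i]; apply/funext => -[|[|j]]; apply/funext => -[|k];
  by rewrite /ps_y /fps3_C /fps3_Y /fpsX /= !fps_coefD ?fps1E ?fps_coef0 /fps_C /=
       ?fps_coef0 ?addr0 ?add0r.
Qed.

Lemma ps_zE p2 : ps_z p2 = fps3_C p2 + fps3_Z.
Proof.
apply/funext => -[|i]; apply/funext => -[|j]; apply/funext => -[|[|k]];
  by rewrite /ps_z /fps3_C /fps3_Z /fpsX /= !fps_coefD ?fps1E ?fps_coef0 /fps_C /=
       ?fps_coef0 ?addr0 ?add0r.
Qed.

Let dx := @fps_deriv (fps (fps C)).
Let dy := fps_map (@fps_deriv (fps C)).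
Let dz := fps_map (fps_map (@fps_deriv C)).
Let dx_der : derivation dx := fps_derivation _.
Let dy_der : derivation dy := fps_map_derivation (fps_derivation _).
Let dz_der : derivation dz := fps_map_derivation (fps_map_derivation (fps_derivation _)).

Lemma fps3_grad_C :
  [/\ forall l, dx (fps3_C l) = 0, forall l, dy (fps3_C l) = 0 & forall l, dz (fps3_C l) = 0].
Proof.
by split=> l; rewrite /dx /dy /dz /fps3_C ?(fps_map_C (fps_derivation _),
  fps_map_C (fps_map_derivation (fps_derivation _))) fps_derivC ?fps_C0.
Qed.

Lemma fps3_grad_X : [/\ dx fps3_X = 1, dy fps3_X = 0 & dz fps3_X = 0].
Proof.
by rewrite /dx /dy /dz /fps3_X fps_derivX (fps_mapX (fps_derivation _))
  (fps_mapX (fps_map_derivation (fps_derivation _))).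
Qed.

Lemma fps3_grad_Y : [/\ dx fps3_Y = 0, dy fps3_Y = 1 & dz fps3_Y = 0].
Proof.
by rewrite /dx /dy /dz /fps3_Y fps_derivC !(fps_map_C (fps_derivation _),
  fps_map_C (fps_map_derivation (fps_derivation _))) fps_derivX
  (fps_mapX (fps_derivation _)) fps_C0.
Qed.

Lemma fps3_grad_Z : [/\ dx fps3_Z = 0, dy fps3_Z = 0 & dz fps3_Z = 1].
Proof.
by rewrite /dx /dy /dz /fps3_Z fps_derivC !(fps_map_C (fps_derivation _),
  fps_map_C (fps_map_derivation (fps_derivation _))) fps_derivC fps_derivX fps_C0.
Qed.

Lemma fps3_coefXM (g : T) i j k : (fps3_X * g) i j k = if i is i'.+1 then g i' j k else 0.
Proof. by rewrite fps_coefXM; case: i. Qed.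

Lemma fps3_coefYM (g : T) i j k : (fps3_Y * g) i j k = if j is j'.+1 then g i j' k else 0.
Proof. by rewrite fps_coefCM fps_coefXM; case: j. Qed.

Lemma fps3_coefZM (g : T) i j k : (fps3_Z * g) i j k = if k is k'.+1 then g i j k' else 0.
Proof. by rewrite !fps_coefCM fps_coefXM; case: k. Qed.

Lemma fps3_decomp (f : T) :
  exists c g h l, f = fps3_C c + fps3_X * g + fps3_Y * h + fps3_Z * l.
Proof.
exists (f 0%N 0%N 0%N), (fun i j k => f i.+1 j k),
  (fun i j k => if i == 0%N then f 0%N j.+1 k else 0),
  (fun i j k => if (i == 0%N) && (j == 0%N) then f 0%N 0%N k.+1 else 0).
apply/funext => i; apply/funext => j; apply/funext => k.
rewrite !fps_coefD fps3_coefXM fps3_coefYM fps3_coefZM /fps3_C /fps_C.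
by case: i => [|i]; case: j => [|j]; case: k => [|k]; rewrite /= ?fps_coef0 ?addr0 ?add0r.
Qed.

(* Induction on the total degree, writing f = c + X g + Y h + Z l. *)
Lemma derivation_fps3_eq0 (D : T -> T) : derivation D -> (forall l, D (fps3_C l) = 0) ->
  D fps3_X = 0 -> D fps3_Y = 0 -> D fps3_Z = 0 -> forall f, D f = 0.
Proof.
move=> [DD DM] DC DX DY DZ.
suff coef0 n f i j k : (i + j + k < n)%N -> D f i j k = 0.
  move=> f; apply/funext => i; apply/funext => j; apply/funext => k.
  exact: (coef0 (i + j + k).+1).
elim: n f i j k => [//|n IHn] f i j k lt_ijk.
have [c [g [h [l ->]]]] := fps3_decomp f.
(* Generalizing the four series keeps rewriting from comparing them by
   conversion, which does not terminate in reasonable time. *)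
move: (DC c) DX DY DZ (fps3_coefXM (D g) i j k) (fps3_coefYM (D h) i j k)
  (fps3_coefZM (D l) i j k).
move: (fps3_C c) fps3_X fps3_Y fps3_Z => C0 X Y Z DC0 DX DY DZ coefX coefY coefZ.
rewrite !DD !DM DC0 DX DY DZ !mul0r !add0r !fps_coefD {}coefX {}coefY {}coefZ.
by case: i j k lt_ijk => [|i] [|j] [|k] lt_ijk; rewrite ?IHn ?addr0 //; lia.
Qed.

Lemma fps3_addrr_eq0 (f : T) : f + f = 0 -> f = 0.
Proof.
move=> ff0; apply/funext => i; apply/funext => j; apply/funext => k.
have two_neq0 : 2%:R != 0 :> C by rewrite pnatr_eq0.
by apply: (addrr_eq0 two_neq0); rewrite -!fps_coefD ff0.
Qed.

Lemma complS_ringE (p : 'I_3 -> C) :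
  complS p = @MkSetting C T +%R -%R *%R (@ps_scl R) 0
                (ps_x (p 0)) (ps_y (p 1)) (ps_z (p 2)) dx dy dz.
Proof. by rewrite /complS ps_mulE ps_dxE ps_dyE ps_dzE. Qed.

Lemma complS_compatibleP (p : 'I_3 -> C) (a b c : complS p) :
  compatible (B:=complS p) (scaled_grad (B:=complS p) c a) (grad (B:=complS p) b)
  <-> jacdet (B:=complS p) a b c = zeroB (complS p).
Proof.
move: a b c; rewrite complS_ringE.
have [dxC dyC dzC] := fps3_grad_C; have [dxX dyX dzX] := fps3_grad_X.
have [dxY dyY dzY] := fps3_grad_Y; have [dxZ dyZ dzZ] := fps3_grad_Z.
apply: (@compatible_gradP C T fps3_C (@ps_scl R)).
- exact: ps_sclE.
- by [].
- exact: fps3_addrr_eq0.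
- exact: dx_der.
- exact: dy_der.
- exact: dz_der.
- exact: dxC.
- exact: dyC.
- exact: dzC.
- exact: (fps_map_deriv (fps_derivation _)).
- exact: (fps_map_deriv (fps_map_derivation (fps_derivation _))).
- exact: (fps_map_comm (fps_map_deriv (fps_derivation _))).
- by rewrite ps_xE (derivation_addl_ker dx_der (dxC _)) dxX.
- by rewrite ps_yE (derivation_addl_ker dx_der (dxC _)) dxY.
- by rewrite ps_zE (derivation_addl_ker dx_der (dxC _)) dxZ.
- by rewrite ps_xE (derivation_addl_ker dy_der (dyC _)) dyX.
- by rewrite ps_yE (derivation_addl_ker dy_der (dyC _)) dyY.
- by rewrite ps_zE (derivation_addl_ker dy_der (dyC _)) dyZ.
- by rewrite ps_xE (derivation_addl_ker dz_der (dzC _)) dzX.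
- by rewrite ps_yE (derivation_addl_ker dz_der (dzC _)) dzY.
- by rewrite ps_zE (derivation_addl_ker dz_der (dzC _)) dzZ.
- move=> D D_der DC Dx Dy Dz; apply: derivation_fps3_eq0 => //.
  + by rewrite -(derivation_addl_ker D_der (DC (p 0))) -ps_xE.
  + by rewrite -(derivation_addl_ker D_der (DC (p 1))) -ps_yE.
  + by rewrite -(derivation_addl_ker D_der (DC (p 2))) -ps_zE.
Qed.

End PowerSeries3.

Theorem corollary1p22 (R : realType) (B : Setting (complex R)) :
  (B = polyS R \/ B = fracS R \/ exists p : 'I_3 -> complex R, B = complS p) ->
  forall a b c : B,
    compatible (scaled_grad c a) (grad b) <-> jacdet a b c = zeroB B.
Proof.
move=> [->|[->|[p ->]]].
- exact: polyS_compatibleP.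
- exact: fracS_compatibleP.
- exact: complS_compatibleP.
Qed.
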